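(* Let $S=\{V^0,V^1,V^2\}$ be a partition of $V(T_A)$ into three classes and $\sigma$ an ordering of $V(T_A)$ such that $S$ and $\sigma$ are strongly consistent. Then none of the induced subgraphs $T_A[V^0]$, $T_A[V^1]$, $T_A[V^2]$ is connected. Moreover, for every simple path $C_0$ in $T_A$, the graph $T_A-V(C_0)$ has proper thinness equal to $3$.
   Context: For a graph $G=(V,E)$, a linear ordering $<$ of $V$ and a partition of $V$ into classes are called strongly consistent if for every triple $r<s<t$ of vertices with $rt\in E$: if $r$ and $s$ belong to the same class then $st\in E$, and if $s$ and $t$ belong to the same class then $rs\in E$. The proper thinness $\mathrm{pthin}(G)$ is the minimum $k$ such that some ordering of $V$ and some partition of $V$ into $k$ classes are strongly consistent. $T_0$ is the subdivided star $K_{1,5}$: a center adjacent to five vertices, each of which is adjacent to one further leaf (11 vertices). $T_A$ is the tree obtained from three disjoint copies of $T_0$ and a new vertex $v_0$ by making $v_0$ adjacent to one leaf of each copy. $G[X]$ denotes the induced subgraph on $X$ and $G-X$ the induced subgraph on $V(G)\setminus X$. *)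

From mathcomp Require Import all_boot.
Set Implicit Arguments. Unset Strict Implicit. Unset Printing Implicit Defensive.

(* A simple graph is a symmetric irreflexive relation e on a finType T.
   Subgraphs are induced subgraphs on a vertex set X : {set T}. *)

(* A linear ordering of X is given by an injective rank function
   ord : T -> nat (r < s in the ordering iff ord r < ord s); a partition of X
   into (at most) k classes is given by a class map cls : T -> 'I_k. *)
Definition strongly_consistent (T : finType) (e : rel T) (X : {set T}) (k : nat)
  (ord : T -> nat) (cls : T -> 'I_k) : Prop :=
  {in X &, injective ord} /\
  forall r s t, r \in X -> s \in X -> t \in X ->
    ord r < ord s -> ord s < ord t -> e r t ->
    (cls r = cls s -> e s t) /\ (cls s = cls t -> e r s).

Definition has_pthin_at_most (T : finType) (e : rel T) (X : {set T}) (k : nat) : Prop :=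
  exists (ord : T -> nat) (cls : T -> 'I_k), strongly_consistent e X ord cls.

Definition pthin_eq (T : finType) (e : rel T) (X : {set T}) (k : nat) : Prop :=
  has_pthin_at_most e X k /\ forall j, j < k -> ~ has_pthin_at_most e X j.

Definition induced_connected (T : finType) (e : rel T) (X : {set T}) : Prop :=
  X != set0 /\
  forall x y, x \in X -> y \in X ->
    connect (fun u v => [&& e u v, u \in X & v \in X]) x y.

(* The tree T_A on 34 vertices 0..33.
   Copy c (c = 0,1,2) of T_0 uses vertices 11c + i, i = 0..10:
   11c is the center, 11c+1..11c+5 its neighbours, and 11c+i+5 is the leaf
   attached to 11c+i (i = 1..5).  Vertex 33 is v_0, adjacent to the leaf
   11c+6 of each copy. *)
Definition in_copy_adj (i j : nat) : bool :=
  [|| (i == 0) && (0 < j <= 5),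
      (j == 0) && (0 < i <= 5),
      (0 < i <= 5) && (j == i + 5)
    | (0 < j <= 5) && (i == j + 5)].

Definition TA_adj_nat (a b : nat) : bool :=
  [|| [&& a < 33, b < 33, a %/ 11 == b %/ 11 & in_copy_adj (a %% 11) (b %% 11)],
      [&& a == 33, b < 33 & b %% 11 == 6]
    | [&& b == 33, a < 33 & a %% 11 == 6]].

Definition TA : rel 'I_34 := fun u v => TA_adj_nat u v.

From mathcomp Require Import all_boot zify.
Set Implicit Arguments. Unset Strict Implicit. Unset Printing Implicit Defensive.

(* The core is a finite fact: the subdivided star T_0 has no strongly consistent ordering
   with two classes, verified by a pruned backtracking search proved complete below.  Hence
   each class of a strongly consistent 3-partition of T_A meets every copy of T_0.  A connected
   class then contains a path leaving a copy, necessarily through its attachment leaf and v_0;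
   doing this for the three copies puts v_0 and its three neighbours in one class.  But in a
   strongly consistent ordering a vertex lies strictly between any two non-adjacent neighbours
   of its own class, which three neighbours cannot all satisfy.  For the second claim, a simple
   path of the tree passes v_0 at most once, so it meets at most two copies of T_0 and the
   third lies in T_A - V(C_0): proper thinness at least 3.  Explicit certificates give 3
   classes for T_A minus any one vertex, hence for all its induced subgraphs. *)

(* [has] stopping at the first success: under [vm_compute] both arguments of [||] are
   evaluated. *)
Fixpoint hasl (T : Type) (p : T -> bool) (s : seq T) : bool :=
  if s is x :: s' then (if p x then true else hasl p s') else false.

Lemma hasl_has (T : Type) (p : T -> bool) s : hasl p s = has p s.
Proof. by elim: s => //= x s ->; case: (p x). Qed.

(* [search fuel P] tries to extend [P], the first vertices of an ordering of [L] paired with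
   their classes, by a vertex [t] of class [c], pruning with three necessary conditions:
   [back_ok] for the triples [r < s < t] now complete, [fwd_ok] for the triples [r < t < u]
   with [u] still unplaced, and [dom_ok], which keeps for every unplaced [u] a class not
   already excluded by a triple [r < s < u].  The nested [if]s are again for lazy evaluation. *)
Section Search.
Variables (T : eqType) (adj : rel T) (allowed : seq nat) (L : seq T).

Fixpoint back_ok (P : seq (T * nat)) (t : T) (c : nat) : bool :=
  if P is (r, cr) :: P' then
    (adj r t ==> all (fun sc => ((cr == sc.2) ==> adj sc.1 t) && ((sc.2 == c) ==> adj r sc.1)) P')
    && back_ok P' t c
  else true.

Definition fwd_ok (P : seq (T * nat)) (t : T) (c : nat) (R : seq T) : bool :=
  all (fun rc => all (fun u => adj rc.1 u ==> (rc.2 == c) ==> adj t u) R) P.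

Fixpoint killed (u : T) (Q : seq (T * nat)) : seq nat :=
  if Q is (v, _) :: Q' then
    (if adj v u then [seq w.2 | w <- Q' & ~~ adj v w.1] else [::]) ++ killed u Q'
  else [::].

Definition dom_ok (Q : seq (T * nat)) (R : seq T) : bool :=
  all (fun u => has (fun c => c \notin killed u Q) allowed) R.

Definition ok_step (P : seq (T * nat)) (t : T) (c : nat) (R : seq T) : bool :=
  if back_ok P t c then if fwd_ok P t c R then dom_ok (rcons P (t, c)) R else false else false.

Fixpoint search (fuel : nat) (P : seq (T * nat)) : bool :=
  let R := [seq v <- L | v \notin map fst P] in
  if R is [::] then true else
  if fuel is m.+1 then
    hasl (fun t => hasl (fun c =>
      if ok_step P t c [seq u <- R | u != t] then search m (rcons P (t, c)) else false) allowed) R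
  else false.

Lemma searchS m P : search m.+1 P =
  let R := [seq v <- L | v \notin map fst P] in
  if R is [::] then true else
    has (fun t => has (fun c => ok_step P t c [seq u <- R | u != t] && search m (rcons P (t, c)))
      allowed) R.
Proof.
rewrite /=; case: [seq v <- L | v \notin map fst P] => // x s.
by rewrite hasl_has; apply: eq_has => t; rewrite hasl_has; apply: eq_has.
Qed.

Section Soundness.
Variable x0 : T.
Local Notation "P `_ i" := (nth (x0, 0) P i).

Lemma back_ok_of P t c :
  (forall i j, i < j < size P -> adj (P`_i).1 t ->
     ((P`_i).2 = (P`_j).2 -> adj (P`_j).1 t) /\ ((P`_j).2 = c -> adj (P`_i).1 (P`_j).1)) ->
  back_ok P t c.
Proof.
elim: P => [//|[r cr] P IH] triples /=; apply/andP; split.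
- apply/implyP => adj_rt; apply/allP => -[s cs] sP.
  have := triples 0 (index (s, cs) P).+1; rewrite /= ltnS index_mem sP nth_index //.
  move=> /(_ isT adj_rt) [sc1 sc2].
  by apply/andP; split; apply/implyP => /eqP; [exact: sc1 | exact: sc2].
- by apply: IH => i j ijP; apply: (triples i.+1 j.+1).
Qed.

Lemma fwd_ok_of P t c R :
  (forall i u, i < size P -> u \in R -> adj (P`_i).1 u -> (P`_i).2 = c -> adj t u) ->
  fwd_ok P t c R.
Proof.
move=> triples; apply/allP => rc rcP; apply/allP => u uR.
apply/implyP => adj_ru; apply/implyP => /eqP eq_c.
by apply: (triples (index rc P) u); rewrite ?index_mem ?nth_index.
Qed.

Lemma mem_killed u Q c : c \in killed u Q -> exists i j, [/\ i < j < size Q,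
  adj (Q`_i).1 u, (Q`_j).2 = c & ~~ adj (Q`_i).1 (Q`_j).1].
Proof.
elim: Q => [//|[v cv] Q IH] /=; rewrite mem_cat => /orP [|].
- case: ifP => // adj_vu /mapP [w]; rewrite mem_filter => /andP [Nadj_vw wQ] ->.
  by exists 0, (index w Q).+1; rewrite /= ltnS index_mem wQ nth_index.
- by move/IH => [i [j [ijQ adj_iu eq_c Nadj_ij]]]; exists i.+1, j.+1.
Qed.

Lemma dom_ok_of Q R :
  (forall u, u \in R -> exists2 c, c \in allowed & forall i j, i < j < size Q ->
     adj (Q`_i).1 u -> (Q`_j).2 = c -> adj (Q`_i).1 (Q`_j).1) ->
  dom_ok Q R.
Proof.
move=> triples; apply/allP => u uR; have [c cA c_ok] := triples u uR.
apply/hasP; exists c => //; apply/negP => /mem_killed [i [j [ijQ adj_iu eq_c Nadj_ij]]].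
by rewrite (c_ok i j ijQ adj_iu eq_c) in Nadj_ij.
Qed.

End Soundness.

Definition good_seq (x0 : T) (F : seq T) (f : T -> nat) :=
  forall i j k, i < j < k -> k < size F -> adj (nth x0 F i) (nth x0 F k) ->
    (f (nth x0 F i) = f (nth x0 F j) -> adj (nth x0 F j) (nth x0 F k)) /\
    (f (nth x0 F j) = f (nth x0 F k) -> adj (nth x0 F i) (nth x0 F j)).

Section Completeness.
Variables (x0 : T) (F : seq T) (f : T -> nat).
Hypotheses (F_uniq : uniq F) (F_L : F =i L) (F_good : good_seq x0 F f).
Hypothesis f_allowed : {in F, forall v, f v \in allowed}.
Local Notation "F `_ i" := (nth x0 F i).

Let prefix n := [seq (v, f v) | v <- take n F].

Let size_prefix n : n <= size F -> size (prefix n) = n.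
Proof. by move=> le_nF; rewrite size_map size_take_min; apply/minn_idPl. Qed.

Let nth_prefix n i : i < n <= size F -> nth (x0, 0) (prefix n) i = (F`_i, f F`_i).
Proof.
case/andP=> lt_in le_nF.
by rewrite (nth_map x0) ?nth_take // size_take_min leq_min lt_in (leq_trans lt_in).
Qed.

Let mem_take_index u n : u \in F -> (u \in take n F) = (index u F < n).
Proof.
move=> uF; apply/idP/idP.
- case/(nthP x0) => i; rewrite size_take_min leq_min => /andP [lt_in lt_iF].
  by rewrite nth_take // => <-; rewrite index_uniq.
- move=> lt_un; rewrite -(nth_index x0 uF) -(nth_take _ lt_un); apply: mem_nth.
  by rewrite size_take_min leq_min lt_un index_mem uF.
Qed.

Let remaining n := [seq v <- L | v \notin take n F].

Let mem_remaining n u : n < size F ->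
  u \in [seq w <- remaining n | w != F`_n] = (u \in F) && (n < index u F).
Proof.
move=> lt_nF; rewrite !mem_filter -F_L; case uF: (u \in F); rewrite ?andbF //= andbT.
rewrite mem_take_index // -leqNgt -[u in u != _](nth_index x0 uF).
by rewrite nth_uniq ?index_mem // ltn_neqAle eq_sym.
Qed.

Let prefix_rcons n : n < size F -> rcons (prefix n) (F`_n, f F`_n) = prefix n.+1.
Proof. by move=> lt_nF; rewrite /prefix (take_nth x0 lt_nF) map_rcons. Qed.

Let ok_step_next n : n < size F ->
  ok_step (prefix n) F`_n (f F`_n) [seq w <- remaining n | w != F`_n].
Proof.
move=> lt_nF; have le_nF := ltnW lt_nF.
rewrite /ok_step (back_ok_of (x0 := x0)); last first.
  move=> i j; rewrite size_prefix // => /andP [lt_ij lt_jn].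
  rewrite !nth_prefix ?lt_jn ?(ltn_trans lt_ij lt_jn) //=.
  by apply: F_good; rewrite ?lt_ij.
rewrite (fwd_ok_of (x0 := x0)); last first.
  move=> i u; rewrite size_prefix // mem_remaining // => lt_in /andP [uF lt_nu].
  rewrite nth_prefix ?lt_in //= => adj_iu eq_f.
  have := F_good (j := n) (k := index u F) (introT andP (conj lt_in lt_nu)).
  by rewrite index_mem uF nth_index // => /(_ isT adj_iu) [/(_ eq_f)].
rewrite prefix_rcons //; apply: (dom_ok_of (x0 := x0)) => u.
rewrite mem_remaining // => /andP [uF lt_nu]; exists (f u); first exact: f_allowed.
move=> i j; rewrite size_prefix // => /andP [lt_ij lt_jn].
rewrite !nth_prefix ?lt_jn ?(ltn_trans lt_ij lt_jn) //= => adj_iu eq_f.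
have := F_good (i := i) (j := j) (k := index u F).
rewrite lt_ij (leq_ltn_trans _ lt_nu) // index_mem uF nth_index //.
by case/(_ isT isT adj_iu) => _ /(_ eq_f).
Qed.

Let search_prefix m n : size F - n < m -> n <= size F -> search m (prefix n).
Proof.
elim: m n => [//|m IH] n lt_m le_nF; rewrite searchS /=.
have -> : map fst (prefix n) = take n F by rewrite /prefix; elim: (take n F) => //= v s ->.
rewrite -/(remaining n); case: (ltnP n (size F)) => [lt_nF | ge_nF]; last first.
  suff -> : remaining n = [::] by [].
  apply/eqP; rewrite -[_ == _]negbK -has_filter; apply/hasPn => v.
  by rewrite -F_L take_oversize ?negbK.
have tR : F`_n \in remaining n.
  by rewrite mem_filter -F_L mem_nth // mem_take_index ?mem_nth // index_uniq // ltnn.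
case E: (remaining n) tR => [//|v R] tR; rewrite -E; apply/hasP; exists F`_n; first by rewrite E.
apply/hasP; exists (f F`_n); first by rewrite f_allowed ?mem_nth.
rewrite ok_step_next // prefix_rcons //; apply: IH => //; lia.
Qed.

Lemma search_good m : size F < m -> search m [::].
Proof. by move=> lt_Fm; have := @search_prefix m 0; rewrite /prefix take0 subn0; apply. Qed.

End Completeness.

Definition consistent_on (ord : T -> nat) (cls : T -> nat) : Prop :=
  {in L &, injective ord} /\
  forall r s t, r \in L -> s \in L -> t \in L -> ord r < ord s -> ord s < ord t -> adj r t ->
    (cls r = cls s -> adj s t) /\ (cls s = cls t -> adj r s).

Theorem search_complete ord cls : uniq L -> consistent_on ord cls ->
  {in L, forall v, cls v \in allowed} -> search (size L).+1 [::].
Proof.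
move=> L_uniq [ord_inj ord_sc] cls_allowed.
case L_x0: L => [|x0 L']; first by rewrite searchS L_x0.
rewrite -L_x0.
pose F := sort (fun u v => ord u <= ord v) L.
have F_L : F =i L by apply: mem_sort.
have F_sorted : sorted (fun u v => ord u <= ord v) F by apply: sort_sorted => u v; apply: leq_total.
have F_uniq : uniq F by rewrite sort_uniq.
have nth_F i : i < size F -> nth x0 F i \in L by move=> lt_iF; rewrite -F_L mem_nth.
have lt_ord i j : i < j < size F -> ord (nth x0 F i) < ord (nth x0 F j).
  case/andP=> lt_ij lt_jF; have lt_iF := ltn_trans lt_ij lt_jF.
  have ord_trans : transitive (fun u v => ord u <= ord v) by move=> ? ? ?; apply: leq_trans.
  rewrite ltn_neqAle (sorted_ltn_nth ord_trans x0 F_sorted) ?inE // andbT.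
  apply: contraTneq lt_ij => /(ord_inj _ _ (nth_F i lt_iF) (nth_F j lt_jF)) /eqP.
  by rewrite nth_uniq // => /eqP ->; rewrite ltnn.
apply: (search_good (x0 := x0) (F := F) (f := cls)); rewrite ?size_sort //.
- move=> i j k /andP [lt_ij lt_jk] lt_kF.
  have lt_jF := ltn_trans lt_jk lt_kF; have lt_iF := ltn_trans lt_ij lt_jF.
  by apply: ord_sc; rewrite ?nth_F ?lt_ord ?lt_ij ?lt_jk.
- by move=> v; rewrite F_L; apply: cls_allowed.
Qed.

End Search.

Lemma all_iota_lt n (p : pred nat) : all p (iota 0 n) -> forall m, m < n -> p m.
Proof. by move/allP=> p_all m lt_mn; apply: p_all; rewrite mem_iota. Qed.

Section Graph.
Variables (T : finType) (e : rel T).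

Lemma connect_exit (C : {pred T}) x y :
  connect e x y -> x \in C -> y \notin C -> exists u v, [/\ u \in C, v \notin C & e u v].
Proof.
case/connectP=> p; elim: p x => [|z p IH] x /=; first by move=> _ -> ->.
case/andP=> e_xz p_path y_last xC; case: (boolP (z \in C)) => [zC | zNC].
- exact: IH p_path y_last zC.
- by exists x, z.
Qed.

Lemma path_const_in (U : Type) (a : {pred T}) (f : T -> U) x p :
  {in a &, forall u v, e u v -> f u = f v} -> path e x p -> all a (x :: p) ->
  {in x :: p, forall v, f v = f x}.
Proof.
move=> f_e; elim: p x => [|y p IH] x /=; first by move=> _ _ v; rewrite inE => /eqP ->.
case/andP=> e_xy p_path /and3P [ax ay ap] v; rewrite inE => /orP [/eqP -> //|vp].
rewrite (IH y p_path) /= ?ay ?ap ?inE ?vp ?orbT //.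
exact/esym/f_e.
Qed.

Section StrongConsistency.
Variables (X : {set T}) (k : nat) (ord : T -> nat) (cls : T -> 'I_k).
Hypotheses (e_sym : symmetric e) (e_irr : irreflexive e).
Hypothesis X_sc : strongly_consistent e X ord cls.

Lemma separated_neighbours m a b : m \in X -> a \in X -> b \in X -> a != b ->
  e m a -> e m b -> ~~ e a b -> cls a = cls m -> cls b = cls m ->
  (ord m < ord a) != (ord m < ord b).
Proof.
case: X_sc => ord_inj sc.
have ord_neq u v : u \in X -> v \in X -> u != v -> ord u != ord v.
  by move=> uX vX; apply: contra => /eqP /ord_inj ->.
wlog lt_ab : a b / ord a < ord b => [hwlog | mX aX bX neq_ab e_ma e_mb Ne_ab cls_a cls_b].
  move=> mX aX bX neq_ab *; have := ord_neq _ _ aX bX neq_ab.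
  rewrite neq_ltn => /orP [lt_ab | lt_ba]; first exact: hwlog.
  by rewrite eq_sym; apply: hwlog; rewrite 1?eq_sym // e_sym.
have neq_ma : m != a by apply: contraTneq e_ma => ->; rewrite e_irr.
have := ord_neq _ _ mX aX neq_ma; rewrite neq_ltn => /orP [lt_ma | lt_am].
  have [/(_ (esym cls_a))] := sc _ _ _ mX aX bX lt_ma lt_ab e_mb.
  by rewrite (negbTE Ne_ab).
have neq_mb : m != b by apply: contraTneq e_mb => ->; rewrite e_irr.
rewrite ltnNge ltnW //=; have := ord_neq _ _ mX bX neq_mb.
rewrite neq_ltn => /orP [-> // | lt_bm].
have [_ /(_ cls_b)] := sc _ _ _ aX bX mX lt_ab lt_bm (etrans (e_sym _ _) e_ma).
by rewrite (negbTE Ne_ab).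
Qed.

Lemma no_monochromatic_claw m a b c : m \in X -> a \in X -> b \in X -> c \in X ->
  [&& a != b, b != c & a != c] -> [&& e m a, e m b & e m c] ->
  [&& ~~ e a b, ~~ e b c & ~~ e a c] -> cls a = cls m -> cls b = cls m -> cls c = cls m ->
  False.
Proof.
move=> mX aX bX cX /and3P [ab bc ac] /and3P [ma mb mc] /and3P [Nab Nbc Nac] ca cb cc.
have := separated_neighbours mX aX bX ab ma mb Nab ca cb.
have := separated_neighbours mX bX cX bc mb mc Nbc cb cc.
have := separated_neighbours mX aX cX ac ma mc Nac ca cc.
by case: (ord m < ord a); case: (ord m < ord b); case: (ord m < ord c).
Qed.

Lemma consistent_on_pullback (adj : rel nat) (L : seq nat) (phi : nat -> T) (g : 'I_k -> nat) :
  {in L, forall a, phi a \in X} -> {in L &, injective phi} ->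
  {in L &, forall a b, adj a b = e (phi a) (phi b)} ->
  {in L &, forall a b, g (cls (phi a)) = g (cls (phi b)) -> cls (phi a) = cls (phi b)} ->
  consistent_on adj L (fun a => ord (phi a)) (fun a => g (cls (phi a))).
Proof.
case: X_sc => ord_inj sc phiX phi_inj phi_adj g_inj; split.
  by move=> a b aL bL /(ord_inj _ _ (phiX a aL) (phiX b bL)) /phi_inj; apply.
move=> r s t rL sL tL lt_rs lt_st; rewrite !phi_adj // => e_rt.
have [sc1 sc2] := sc _ _ _ (phiX r rL) (phiX s sL) (phiX t tL) lt_rs lt_st e_rt.
by split=> /g_inj eq_cls; [apply: sc1 | apply: sc2]; rewrite ?eq_cls.
Qed.

End StrongConsistency.
End Graph.

Definition copy (c : 'I_3) : {set 'I_34} := [set v : 'I_34 | (v < 33) && (v %/ 11 == c)].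

Definition copy_vertex (c : 'I_3) (a : nat) : 'I_34 := inord (11 * c + a).

Definition v0 : 'I_34 := @Ordinal 34 33 isT.

Lemma TA_sym : symmetric TA.
Proof.
have TA_sym_nat : all (fun a => all (fun b => TA_adj_nat a b == TA_adj_nat b a)
  (iota 0 34)) (iota 0 34) by vm_compute.
by move=> u v; apply/eqP/(all_iota_lt (all_iota_lt TA_sym_nat (ltn_ord u))).
Qed.

Lemma TA_irr : irreflexive TA.
Proof.
have TA_irr_nat : all (fun a => ~~ TA_adj_nat a a) (iota 0 34) by vm_compute.
by move=> u; apply/negbTE/(all_iota_lt TA_irr_nat).
Qed.

Lemma val_copy_vertex c a : a < 11 -> val (copy_vertex c a) = 11 * c + a.
Proof. by move=> lt_a; rewrite /copy_vertex /= inordK //; have := ltn_ord c; lia. Qed.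

Lemma copy_vertex_in c a : a < 11 -> copy_vertex c a \in copy c.
Proof. by move=> lt_a; rewrite inE val_copy_vertex //; have := ltn_ord c; lia. Qed.

Lemma copy_vertex_inj c : {in iota 0 11 &, injective (copy_vertex c)}.
Proof.
move=> a b; rewrite !mem_iota => lt_a lt_b /(congr1 val).
by rewrite !val_copy_vertex //; lia.
Qed.

Lemma TA_copy_vertex c a b : a < 11 -> b < 11 ->
  TA (copy_vertex c a) (copy_vertex c b) = in_copy_adj a b.
Proof.
have copy_nat : all (fun c => all (fun a => all (fun b =>
  TA_adj_nat (11 * c + a) (11 * c + b) == in_copy_adj a b) (iota 0 11)) (iota 0 11)) (iota 0 3)
  by vm_compute.
move=> lt_a lt_b; rewrite /TA !val_copy_vertex //; apply/eqP.
by move: copy_nat => /all_iota_lt/(_ c (ltn_ord c))/all_iota_lt/(_ a lt_a)/all_iota_lt/(_ b lt_b).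
Qed.

Lemma TA_exit_copy (c : 'I_3) u v : TA u v -> u \in copy c -> v \notin copy c ->
  val u = 11 * c + 6 /\ v = v0.
Proof.
have exit_nat : all (fun c => all (fun a => all (fun b =>
  TA_adj_nat a b ==> ((a < 33) && (a %/ 11 == c)) ==> ~~ ((b < 33) && (b %/ 11 == c)) ==>
  (a == 11 * c + 6) && (b == 33)) (iota 0 34)) (iota 0 34)) (iota 0 3) by vm_compute.
rewrite /TA !inE => TA_uv u_c v_c.
have := all_iota_lt (all_iota_lt (all_iota_lt exit_nat (ltn_ord c)) (ltn_ord u)) (ltn_ord v).
by rewrite TA_uv u_c (negbTE v_c) => /andP [/eqP u_attach /eqP v_v0]; split; last apply: val_inj.
Qed.

(* On [0, ..., 10], [in_copy_adj] is the subdivided star T_0 itself. *)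
Lemma T0_search_fails : search in_copy_adj (iota 0 2) (iota 0 11) 12 [::] = false.
Proof. vm_cast_no_check (erefl false). Qed.

Lemma copy_needs_three_classes (X : {set 'I_34}) k ord (cls : 'I_34 -> 'I_k) (c : 'I_3)
    (g : 'I_k -> nat) :
  strongly_consistent TA X ord cls -> copy c \subset X ->
  {in copy c &, forall u v, g (cls u) = g (cls v) -> cls u = cls v} ->
  {in copy c, forall v, g (cls v) < 2} -> False.
Proof.
move=> X_sc /subsetP copy_X g_inj g_lt2.
have in_copy a : a \in iota 0 11 -> copy_vertex c a \in copy c.
  by rewrite mem_iota => lt_a; apply: copy_vertex_in.
have T0_sc : consistent_on in_copy_adj (iota 0 11)
    (fun a => ord (copy_vertex c a)) (fun a => g (cls (copy_vertex c a))).
  apply: (consistent_on_pullback X_sc); first by move=> a /in_copy /copy_X.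
  - exact: copy_vertex_inj.
  - by move=> a b; rewrite !mem_iota => lt_a lt_b; rewrite TA_copy_vertex.
  - by move=> a b /in_copy aC /in_copy bC; apply: g_inj.
suff cls_lt2 : {in iota 0 11, forall a, g (cls (copy_vertex c a)) \in iota 0 2}.
  by have := search_complete (iota_uniq 0 11) T0_sc cls_lt2; rewrite size_iota T0_search_fails.
by move=> a /in_copy /g_lt2; rewrite mem_iota.
Qed.

Lemma class_meets_copy ord (cls : 'I_34 -> 'I_3) (c i : 'I_3) :
  strongly_consistent TA [set: 'I_34] ord cls -> exists2 v, v \in copy c & cls v = i.
Proof.
move=> sc; have [/exists_inP [v vC /eqP <-]|/exists_inPn cls_neq] :=
  boolP [exists v in copy c, cls v == i]; first by exists v.
exfalso.
pose g j : nat := odflt ord0 (unlift i j).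
apply: (copy_needs_three_classes (g := g) sc (subsetT _)).
- move=> u v /cls_neq; rewrite eq_sym => /unlift_some [a -> ua].
  move=> /cls_neq; rewrite eq_sym => /unlift_some [b -> ub].
  by rewrite /g ua ub => /= /val_inj ->.
- by move=> u _; rewrite /g; case: (unlift i (cls u)).
Qed.

Lemma class_not_connected ord (cls : 'I_34 -> 'I_3) (i : 'I_3) :
  strongly_consistent TA [set: 'I_34] ord cls -> ~ induced_connected TA [set v | cls v == i].
Proof.
move=> sc [_ X_conn]; set X := [set v | cls v == i] in X_conn.
have exit_in_X (c d : 'I_3) : c != d -> exists2 u : 'I_34, val u = 11 * c + 6 & u \in X /\ v0 \in X.
  move=> neq_cd; have [v vc cls_v] := class_meets_copy c i sc.
  have [w wd cls_w] := class_meets_copy d i sc.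
  have w_Nc : w \notin copy c.
    move: wd; rewrite !inE => /andP [_ /eqP ->]; rewrite andbC.
    by apply: contraNN neq_cd => /andP [/eqP/val_inj ->].
  have vX : v \in X by rewrite inE cls_v.
  have wX : w \in X by rewrite inE cls_w.
  have [u [u' [uc u'_Nc /and3P [TA_uu' uX u'X]]]] := connect_exit (X_conn v w vX wX) vc w_Nc.
  have [val_u u'_v0] := TA_exit_copy TA_uu' uc u'_Nc.
  by exists u; rewrite -?u'_v0.
have [a0 val_a0 [a0X v0X]] := exit_in_X ord0 ord_max isT.
have [a1 val_a1 [a1X _]] := exit_in_X (@Ordinal 3 1 isT) ord0 isT.
have [a2 val_a2 [a2X _]] := exit_in_X ord_max ord0 isT.
move: v0X a0X a1X a2X; rewrite !inE => /eqP cls_v0 /eqP cls_a0 /eqP cls_a1 /eqP cls_a2.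
apply: (no_monochromatic_claw TA_sym TA_irr sc (in_setT v0) (in_setT a0) (in_setT a1)
  (in_setT a2)); rewrite ?cls_v0 //.
- by rewrite -!(inj_eq val_inj) val_a0 val_a1 val_a2.
- by rewrite /TA val_a0 val_a1 val_a2.
- by rewrite /TA val_a0 val_a1 val_a2.
Qed.

Definition certificate_ok (vs cl : seq nat) : bool :=
  let adj i j := TA_adj_nat (nth 0 vs i) (nth 0 vs j) in
  let col i := nth 0 cl (nth 0 vs i) in
  all (fun i => all (fun k => adj i k ==> all (fun j =>
      ((col i == col j) ==> adj j k) && ((col j == col k) ==> adj i j))
    (iota i.+1 (k - i.+1))) (iota i.+1 (size vs - i.+1))) (iota 0 (size vs)).

Lemma certificate_pthin3 (vs cl : seq nat) (X : {set 'I_34}) :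
  certificate_ok vs cl -> all (fun c => c < 3) cl -> {in X, forall v : 'I_34, val v \in vs} ->
  has_pthin_at_most TA X 3.
Proof.
move=> cert cl_lt3 X_vs.
have col_lt3 n : nth 0 cl n < 3.
  case: (ltnP n (size cl)) => [lt_n | ?]; last by rewrite nth_default.
  by apply: (allP cl_lt3); rewrite mem_nth.
have mem_range m n l : m <= l -> l < n -> l \in iota m (n - m).
  by move=> le_ml lt_ln; rewrite mem_iota le_ml subnKC // (leq_trans le_ml (ltnW lt_ln)).
exists (fun v : 'I_34 => index (val v) vs), (fun v : 'I_34 => inord (nth 0 cl v)); split.
  move=> u v uX vX eq_idx; apply: val_inj.
  by rewrite -(nth_index 0 (X_vs u uX)) eq_idx nth_index ?X_vs.
move=> r s t rX sX tX /= lt_rs lt_st TA_rt.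
have r_vs := X_vs r rX; have s_vs := X_vs s sX; have t_vs := X_vs t tX.
have lt_t : index (val t) vs < size vs by rewrite index_mem.
have r_range : index (val r) vs \in iota 0 (size vs).
  by rewrite mem_iota (ltn_trans lt_rs (ltn_trans lt_st lt_t)).
have /allP/(_ _ r_range)/allP/(_ _ (mem_range _ _ _ (ltn_trans lt_rs lt_st) lt_t))
  := cert.
rewrite !nth_index // [TA_adj_nat _ _]TA_rt => /allP/(_ _ (mem_range _ _ _ lt_rs lt_st)).
rewrite !nth_index // => /andP [/implyP sc1 /implyP sc2].
split=> /(congr1 val); rewrite /= !inordK // => eq_col; [apply: sc1 | apply: sc2]; exact/eqP.
Qed.

(* Entry [x]: the vertices of T_A - x in a strongly consistent order, and the class of every
   vertex, found by computer search. *)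
Definition certificates : seq (seq nat * seq nat) := [::
  ([:: 31; 32; 29; 26; 27; 24; 23; 25; 22; 7; 30; 5; 10; 2; 28; 33; 6; 17; 1; 20; 11; 15; 12; 18; 13; 9; 16; 21; 8; 4; 14; 19; 3], [:: 0; 0; 2; 1; 0; 1; 0; 2; 1; 0; 1; 2; 1; 1; 2; 0; 1; 2; 0; 2; 0; 1; 2; 0; 0; 1; 2; 1; 0; 0; 1; 2; 1; 2]);
  ([:: 15; 20; 14; 19; 18; 13; 11; 16; 21; 17; 12; 28; 33; 6; 24; 23; 29; 30; 22; 25; 26; 31; 10; 27; 32; 5; 2; 7; 0; 8; 4; 3; 9], [:: 2; 0; 0; 2; 0; 2; 1; 1; 1; 0; 2; 1; 0; 2; 0; 0; 2; 1; 2; 2; 2; 2; 1; 0; 1; 0; 0; 1; 0; 2; 2; 2; 1; 2]);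
  ([:: 7; 25; 30; 26; 31; 22; 23; 24; 27; 32; 29; 17; 28; 12; 33; 10; 5; 6; 0; 1; 4; 9; 3; 8; 18; 13; 21; 16; 20; 15; 11; 14; 19], [:: 0; 1; 0; 0; 1; 0; 1; 1; 1; 1; 0; 2; 2; 0; 0; 1; 0; 1; 0; 2; 1; 1; 1; 0; 2; 0; 0; 1; 0; 2; 1; 2; 1; 1]);
  ([:: 19; 13; 14; 18; 16; 11; 12; 21; 15; 20; 17; 6; 33; 1; 10; 5; 28; 4; 0; 9; 30; 23; 2; 7; 25; 8; 29; 22; 24; 26; 31; 27; 32], [:: 2; 2; 2; 0; 0; 0; 0; 2; 2; 0; 0; 1; 0; 1; 2; 1; 2; 0; 0; 0; 1; 2; 1; 1; 0; 0; 0; 1; 1; 2; 0; 0; 2; 1]);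
  ([:: 8; 7; 3; 5; 0; 10; 2; 9; 21; 16; 18; 1; 13; 6; 17; 11; 33; 12; 14; 15; 20; 28; 19; 23; 30; 25; 31; 22; 26; 27; 29; 32; 24], [:: 1; 1; 0; 2; 0; 2; 1; 0; 1; 2; 2; 2; 1; 0; 1; 2; 2; 1; 0; 1; 2; 2; 2; 2; 0; 1; 0; 0; 0; 2; 1; 0; 1; 0]);
  ([:: 18; 13; 20; 15; 19; 11; 9; 14; 12; 16; 21; 4; 17; 33; 6; 1; 0; 2; 3; 7; 8; 32; 27; 28; 23; 30; 24; 25; 26; 22; 31; 29; 10], [:: 2; 0; 0; 2; 2; 0; 0; 0; 2; 2; 2; 0; 1; 0; 1; 2; 0; 1; 2; 1; 2; 0; 2; 0; 0; 1; 1; 2; 1; 2; 1; 1; 0; 1]);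
  ([:: 15; 20; 18; 11; 13; 21; 16; 12; 17; 14; 33; 28; 19; 10; 23; 9; 4; 5; 1; 0; 3; 2; 8; 7; 31; 26; 30; 25; 22; 29; 24; 32; 27], [:: 1; 2; 1; 2; 1; 2; 0; 1; 2; 1; 2; 1; 2; 2; 2; 1; 2; 0; 2; 2; 2; 0; 0; 0; 1; 1; 1; 0; 0; 2; 2; 2; 1; 1]);
  ([:: 18; 20; 13; 15; 14; 16; 11; 21; 19; 17; 12; 33; 1; 6; 28; 10; 5; 0; 2; 4; 9; 23; 8; 3; 30; 32; 25; 22; 27; 26; 31; 29; 24], [:: 2; 2; 1; 2; 1; 1; 1; 0; 1; 1; 1; 2; 2; 1; 0; 0; 1; 1; 1; 0; 0; 1; 0; 0; 0; 1; 1; 2; 0; 1; 1; 2; 2; 0]);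
  ([:: 21; 18; 11; 13; 16; 20; 15; 19; 14; 10; 5; 7; 2; 3; 4; 12; 0; 9; 1; 33; 6; 17; 32; 28; 23; 27; 22; 26; 31; 25; 29; 30; 24], [:: 1; 1; 0; 0; 0; 1; 0; 0; 0; 0; 0; 2; 2; 0; 0; 0; 1; 2; 2; 1; 1; 1; 2; 2; 2; 1; 0; 0; 1; 0; 1; 0; 0; 1]);
  ([:: 18; 13; 19; 14; 20; 15; 21; 11; 8; 3; 16; 12; 10; 5; 17; 0; 4; 2; 7; 1; 6; 33; 23; 28; 29; 24; 25; 22; 30; 31; 26; 32; 27], [:: 0; 0; 2; 0; 2; 2; 2; 2; 0; 0; 2; 1; 1; 0; 0; 0; 2; 1; 1; 2; 2; 2; 2; 2; 1; 0; 1; 1; 1; 1; 0; 0; 2; 1]);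
  ([:: 24; 29; 32; 27; 22; 25; 30; 9; 26; 31; 4; 7; 2; 5; 0; 1; 23; 28; 6; 33; 3; 21; 16; 17; 12; 8; 13; 11; 18; 19; 15; 14; 20], [:: 2; 1; 1; 2; 2; 1; 1; 1; 2; 2; 0; 1; 0; 0; 1; 0; 1; 0; 2; 2; 0; 1; 0; 0; 1; 1; 1; 1; 0; 0; 2; 1; 2; 0]);
  ([:: 3; 8; 15; 20; 4; 9; 2; 0; 7; 18; 13; 19; 14; 5; 10; 1; 6; 12; 33; 26; 17; 28; 31; 23; 22; 30; 25; 27; 32; 24; 29; 16; 21], [:: 0; 0; 1; 0; 2; 1; 0; 2; 2; 1; 1; 0; 1; 2; 2; 2; 2; 1; 2; 2; 1; 1; 0; 2; 2; 2; 2; 2; 1; 2; 1; 0; 1; 0]);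
  ([:: 18; 13; 15; 20; 16; 21; 14; 11; 5; 10; 19; 7; 2; 0; 3; 8; 4; 17; 9; 33; 6; 1; 29; 28; 24; 22; 23; 25; 30; 26; 27; 32; 31], [:: 0; 0; 2; 2; 1; 0; 1; 2; 2; 1; 1; 1; 0; 0; 2; 0; 0; 2; 0; 2; 2; 2; 0; 2; 0; 1; 2; 0; 1; 0; 1; 2; 0; 2]);
  ([:: 10; 9; 4; 0; 5; 3; 2; 8; 1; 7; 6; 28; 33; 17; 12; 19; 14; 11; 16; 21; 15; 20; 27; 32; 29; 24; 23; 26; 22; 31; 25; 18; 30], [:: 2; 2; 1; 0; 2; 1; 0; 1; 0; 2; 1; 1; 1; 0; 0; 1; 0; 1; 0; 0; 0; 0; 0; 2; 1; 1; 1; 0; 2; 1; 1; 2; 1; 1]);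
  ([:: 10; 8; 3; 2; 0; 7; 5; 4; 1; 9; 6; 20; 15; 19; 18; 13; 11; 16; 12; 17; 21; 32; 33; 27; 28; 23; 22; 26; 31; 24; 29; 25; 30], [:: 1; 1; 0; 1; 2; 2; 2; 0; 1; 0; 2; 1; 1; 0; 0; 1; 0; 1; 0; 0; 0; 0; 2; 1; 0; 2; 1; 0; 1; 0; 1; 1; 0; 2]);
  ([:: 4; 9; 20; 7; 8; 2; 3; 0; 5; 1; 6; 17; 10; 21; 33; 12; 11; 16; 14; 13; 28; 18; 19; 29; 23; 24; 32; 25; 22; 27; 30; 31; 26], [:: 2; 1; 1; 0; 2; 0; 1; 1; 0; 1; 0; 1; 1; 1; 0; 0; 0; 1; 1; 0; 1; 0; 2; 2; 0; 0; 1; 1; 2; 1; 0; 0; 1; 2]);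
  ([:: 25; 30; 32; 22; 27; 26; 24; 31; 29; 28; 21; 23; 19; 18; 13; 14; 15; 11; 12; 20; 33; 17; 6; 1; 8; 3; 5; 0; 10; 4; 9; 7; 2], [:: 1; 0; 1; 2; 2; 2; 0; 2; 2; 0; 0; 2; 2; 2; 1; 1; 0; 2; 2; 1; 1; 1; 2; 2; 0; 2; 1; 0; 0; 0; 0; 1; 1; 0]);
  ([:: 19; 18; 13; 14; 21; 16; 12; 11; 20; 15; 31; 25; 30; 22; 26; 24; 29; 28; 27; 32; 23; 33; 6; 1; 8; 3; 10; 5; 2; 7; 4; 0; 9], [:: 2; 2; 0; 0; 1; 0; 1; 1; 0; 0; 1; 1; 0; 1; 2; 2; 0; 0; 1; 0; 0; 0; 2; 2; 0; 2; 0; 1; 0; 0; 1; 0; 1; 2]);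
  ([:: 2; 1; 7; 10; 5; 4; 0; 3; 8; 9; 6; 19; 33; 14; 28; 17; 11; 12; 13; 15; 16; 20; 30; 25; 21; 23; 24; 22; 29; 26; 31; 32; 27], [:: 2; 1; 2; 2; 0; 0; 1; 0; 2; 0; 0; 1; 0; 0; 1; 0; 1; 0; 0; 2; 0; 1; 0; 2; 1; 0; 1; 1; 2; 2; 0; 2; 2; 0]);
  ([:: 3; 8; 10; 0; 4; 9; 5; 2; 20; 15; 7; 18; 13; 14; 1; 6; 12; 33; 11; 17; 16; 28; 23; 21; 32; 22; 27; 24; 26; 31; 25; 30; 29], [:: 2; 2; 0; 2; 1; 0; 2; 0; 1; 1; 0; 1; 0; 0; 0; 1; 1; 0; 0; 0; 1; 0; 1; 2; 2; 1; 0; 2; 2; 2; 1; 0; 0; 2]);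
  ([:: 7; 4; 9; 1; 2; 3; 0; 5; 6; 8; 33; 10; 17; 12; 28; 21; 16; 15; 11; 13; 14; 19; 31; 26; 23; 18; 24; 29; 32; 27; 25; 22; 30], [:: 0; 2; 1; 1; 2; 0; 2; 1; 1; 0; 0; 0; 0; 1; 0; 1; 1; 1; 1; 0; 0; 1; 0; 2; 2; 2; 0; 1; 2; 1; 0; 0; 1; 2]);
  ([:: 7; 2; 10; 0; 5; 4; 9; 3; 1; 8; 15; 20; 6; 19; 14; 16; 12; 11; 17; 33; 13; 28; 23; 18; 26; 31; 22; 24; 29; 30; 25; 27; 32], [:: 2; 2; 2; 0; 0; 1; 2; 2; 0; 1; 0; 1; 0; 1; 0; 1; 0; 0; 1; 0; 0; 0; 2; 2; 1; 1; 1; 2; 0; 0; 0; 0; 2; 2]);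
  ([:: 18; 13; 27; 32; 16; 21; 11; 15; 20; 17; 12; 14; 19; 26; 31; 30; 25; 6; 33; 28; 23; 24; 29; 1; 10; 8; 5; 0; 3; 9; 2; 7; 4], [:: 0; 0; 2; 2; 0; 1; 0; 2; 2; 1; 1; 0; 1; 0; 1; 2; 1; 2; 2; 0; 2; 2; 0; 2; 1; 0; 0; 1; 1; 2; 1; 0; 1; 2]);
  ([:: 19; 14; 16; 21; 18; 13; 11; 15; 17; 12; 28; 20; 6; 33; 2; 1; 7; 5; 10; 4; 0; 9; 3; 8; 32; 24; 27; 29; 22; 26; 25; 30; 31], [:: 2; 1; 2; 1; 0; 1; 0; 0; 2; 0; 0; 0; 0; 2; 1; 2; 1; 1; 2; 0; 2; 2; 2; 0; 2; 2; 1; 0; 0; 1; 2; 0; 1; 1]);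
  ([:: 8; 10; 5; 3; 2; 0; 7; 4; 9; 27; 32; 29; 31; 26; 23; 22; 25; 30; 28; 6; 1; 33; 17; 19; 12; 14; 18; 13; 11; 16; 15; 21; 20], [:: 1; 1; 2; 0; 2; 2; 0; 0; 0; 0; 1; 2; 2; 1; 0; 2; 1; 2; 1; 0; 1; 0; 0; 2; 0; 0; 2; 0; 2; 2; 0; 2; 2; 2]);
  ([:: 21; 16; 19; 14; 18; 11; 15; 20; 13; 29; 12; 31; 24; 26; 22; 23; 17; 28; 27; 32; 30; 33; 10; 6; 9; 5; 1; 4; 3; 0; 2; 7; 8], [:: 2; 0; 2; 0; 1; 2; 0; 2; 1; 1; 2; 2; 0; 0; 1; 1; 2; 0; 0; 0; 1; 0; 1; 2; 1; 0; 2; 1; 2; 1; 1; 2; 1; 0]);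
  ([:: 20; 15; 21; 16; 11; 19; 14; 13; 18; 32; 27; 29; 24; 23; 22; 25; 30; 31; 28; 12; 33; 17; 10; 6; 1; 9; 4; 0; 5; 7; 2; 3; 8], [:: 0; 0; 1; 0; 2; 1; 2; 2; 1; 2; 1; 1; 1; 2; 2; 0; 2; 0; 2; 0; 0; 2; 2; 0; 0; 2; 0; 2; 0; 0; 2; 2; 2; 2]);
  ([:: 5; 10; 4; 9; 0; 2; 7; 3; 8; 1; 6; 33; 28; 23; 30; 22; 25; 26; 31; 24; 29; 13; 18; 17; 20; 11; 12; 16; 15; 19; 14; 32; 21], [:: 2; 2; 0; 0; 0; 2; 0; 1; 0; 1; 0; 2; 1; 2; 0; 0; 1; 1; 0; 2; 0; 1; 2; 2; 2; 0; 0; 0; 2; 0; 0; 0; 0; 1]);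
  ([:: 27; 31; 32; 26; 23; 22; 30; 24; 29; 25; 19; 14; 20; 15; 11; 16; 21; 17; 12; 13; 33; 18; 7; 2; 1; 6; 8; 3; 0; 10; 5; 9; 4], [:: 2; 1; 1; 0; 0; 0; 0; 1; 0; 2; 1; 2; 0; 0; 2; 0; 1; 1; 1; 1; 1; 1; 2; 0; 0; 2; 0; 1; 0; 0; 1; 0; 2; 2]);
  ([:: 9; 4; 8; 0; 2; 3; 7; 10; 5; 6; 1; 31; 33; 28; 23; 26; 24; 22; 27; 17; 12; 25; 30; 19; 14; 32; 18; 13; 16; 11; 21; 20; 15], [:: 2; 2; 1; 0; 1; 0; 1; 1; 0; 0; 1; 2; 2; 0; 1; 2; 1; 2; 0; 1; 0; 0; 1; 1; 0; 1; 0; 0; 1; 0; 1; 0; 0; 2]);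
  ([:: 14; 20; 19; 11; 16; 21; 18; 15; 12; 13; 17; 31; 26; 28; 33; 23; 25; 24; 22; 6; 29; 27; 32; 1; 8; 3; 5; 10; 2; 0; 4; 7; 9], [:: 0; 0; 1; 1; 0; 1; 0; 1; 1; 2; 2; 2; 1; 2; 0; 1; 0; 0; 0; 2; 1; 0; 1; 2; 2; 2; 1; 1; 2; 2; 0; 1; 2; 0]);
  ([:: 19; 14; 18; 13; 12; 16; 11; 15; 21; 20; 9; 17; 4; 10; 5; 1; 33; 0; 6; 28; 2; 7; 3; 23; 8; 24; 29; 22; 25; 30; 26; 32; 27], [:: 0; 1; 2; 0; 0; 1; 1; 2; 2; 0; 1; 0; 2; 2; 0; 0; 1; 2; 2; 1; 0; 1; 0; 1; 1; 1; 1; 1; 1; 2; 2; 0; 0; 2]);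
  ([:: 7; 9; 4; 0; 2; 1; 5; 10; 8; 3; 31; 29; 26; 24; 27; 22; 6; 23; 25; 30; 20; 28; 33; 17; 15; 11; 12; 13; 18; 14; 19; 21; 16], [:: 0; 1; 2; 0; 0; 2; 1; 2; 2; 0; 2; 2; 1; 1; 1; 2; 2; 0; 0; 0; 2; 1; 2; 0; 0; 2; 2; 0; 0; 0; 2; 2; 0; 1]);
  ([:: 28; 23; 25; 30; 24; 29; 32; 22; 27; 26; 31; 11; 12; 17; 14; 19; 21; 16; 15; 20; 18; 6; 13; 1; 7; 2; 8; 3; 0; 4; 5; 10; 9], [:: 1; 1; 2; 2; 2; 0; 1; 2; 0; 2; 0; 0; 2; 0; 2; 2; 2; 1; 2; 1; 2; 1; 0; 0; 1; 1; 1; 1; 2; 2; 2; 1; 2; 0])].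

Lemma certificates_ok : all (fun x =>
  let: (vs, cl) := nth ([::], [::]) certificates x in
  [&& certificate_ok vs cl, all (fun c => c < 3) cl &
      all (fun v => (v == x) || (v \in vs)) (iota 0 34)]) (iota 0 34).
Proof. vm_cast_no_check (erefl true). Qed.

Lemma pthin_le3_deleted (x : 'I_34) (X : {set 'I_34}) : x \notin X -> has_pthin_at_most TA X 3.
Proof.
move=> xNX; have := all_iota_lt certificates_ok (ltn_ord x).
case: (nth _ certificates x) => vs cl /and3P [cert cl_lt3 cover].
apply: (certificate_pthin3 cert cl_lt3) => v vX.
have /orP [/eqP eq_vx | //] := all_iota_lt cover (ltn_ord v).
by move: xNX; rewrite -(val_inj eq_vx) vX.
Qed.

Lemma pthin_gt2_of_copy (X : {set 'I_34}) (c : 'I_3) :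
  copy c \subset X -> forall j, j < 3 -> ~ has_pthin_at_most TA X j.
Proof.
move=> copy_X j lt_j3 [ord [cls X_sc]].
apply: (copy_needs_three_classes (g := val) X_sc copy_X) => [u v _ _ /val_inj //|v _].
exact: leq_trans (ltn_ord (cls v)) lt_j3.
Qed.

Lemma TA_same_block u v : u != v0 -> v != v0 -> TA u v -> u %/ 11 = v %/ 11.
Proof.
move=> u_Nv0 v_Nv0 TA_uv.
have lt_u33 : u < 33 by move: u_Nv0 (ltn_ord u); rewrite -(inj_eq val_inj) /=; lia.
have lt_c : u %/ 11 < 3 by lia.
have u_c : u \in copy (Ordinal lt_c) by rewrite inE lt_u33 /=.
case: (boolP (v \in copy (Ordinal lt_c))) => [|v_Nc]; first by rewrite inE => /andP [_ /eqP].
by have [_ v_v0] := TA_exit_copy TA_uv u_c v_Nc; rewrite v_v0 eqxx in v_Nv0.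
Qed.

Lemma sorted_two_blocks (s : seq 'I_34) : sorted TA s -> uniq s ->
  exists c1 c2, {in s, forall v : 'I_34, v != v0 -> v %/ 11 = c1 \/ v %/ 11 = c2}.
Proof.
have one_block (t : seq 'I_34) :
    sorted TA t -> v0 \notin t -> exists c, {in t, forall v : 'I_34, v %/ 11 = c}.
  case: t => [|y t] /= t_path v0_Nt; first by exists 0.
  exists (y %/ 11); apply: (path_const_in (a := predC1 v0)) t_path _.
    by move=> u v u_Nv0 v_Nv0; apply: TA_same_block.
  by apply/allP=> v /=; apply: contraTneq => ->.
case: (boolP (v0 \in s)) => [/splitPr [s1 s2] | v0_Ns] s_sorted s_uniq; last first.
  by have [c s_c] := one_block s s_sorted v0_Ns; exists c, c => v /s_c; left.
move: s_sorted; rewrite sorted_cat_cons -cats1 => /andP [/cat_sorted2 [s1_sorted _] s2_path].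
move: s_uniq; rewrite cat_uniq /= => /and4P [_ /norP [v0_Ns1 _] v0_Ns2 _].
have [c1 s1_c1] := one_block s1 s1_sorted v0_Ns1.
have [c2 s2_c2] := one_block s2 (path_sorted s2_path) v0_Ns2.
exists c1, c2 => v; rewrite mem_cat inE => /or3P [/s1_c1 -> | /eqP -> | /s2_c2 ->].
- by left.
- by rewrite eqxx.
- by right.
Qed.

Lemma path_avoids_copy (x : 'I_34) (p : seq 'I_34) : path TA x p -> uniq (x :: p) ->
  exists c : 'I_3, copy c \subset ~: [set v | v \in x :: p].
Proof.
move=> xp_path xp_uniq; have [c1 [c2 blocks]] := sorted_two_blocks (s := x :: p) xp_path xp_uniq.
have [c neq_c] : exists c : 'I_3, (c != c1 :> nat) && (c != c2 :> nat).
  case: (boolP ((0 != c1) && (0 != c2))) => [? | ?]; first by exists ord0.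
  case: (boolP ((1 != c1) && (1 != c2))) => [? | ?]; first by exists (@Ordinal 3 1 isT).
  by exists ord_max; rewrite /=; lia.
exists c; apply/subsetP => v; rewrite !inE => /andP [lt_v33 /eqP v_c].
apply: contraTN neq_c => v_xp.
have v_Nv0 : v != v0 by rewrite -(inj_eq val_inj) /= neq_ltn lt_v33.
by rewrite -v_c; case: (blocks v v_xp v_Nv0) => ->; rewrite eqxx ?andbF.
Qed.

Theorem proposition7 (ord : 'I_34 -> nat) (cls : 'I_34 -> 'I_3) :
  (forall i : 'I_3, exists v, cls v = i) ->
  strongly_consistent TA [set: 'I_34] ord cls ->
  (forall i : 'I_3, ~ induced_connected TA [set v | cls v == i]) /\
  (forall (x : 'I_34) (p : seq 'I_34), path TA x p -> uniq (x :: p) ->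
     pthin_eq TA (~: [set v | v \in x :: p]) 3).
Proof.
move=> _ sc; split=> [i | x p xp_path xp_uniq]; first exact: class_not_connected sc.
split; first by apply: (pthin_le3_deleted (x := x)); rewrite !inE eqxx.
have [c copy_sub] := path_avoids_copy xp_path xp_uniq.
exact: pthin_gt2_of_copy copy_sub.
Qed.
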